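(* Let $(\Omega,\mathbb{F},\mathbb{P})$ be a probability space, let $J\in\mathbb{N}$ and $S=\{0,1,\ldots,J\}$. For each $j,k\in S$, $k\neq j$, let $(\mu_{jk}(t))_{t\geq 0}$ be a stochastic process with values in $[0,\infty)$, continuous sample paths and $\mathbb{E}[\mu_{jk}(t)]<\infty$ for all $t$. Let $X=(X_t)_{t\geq 0}$ be a jump process with values in $S$ and deterministic initial state $x_0\in S$, constructed canonically (via the Ionescu-Tulcea theorem) so that, conditionally on $\mu=(\mu_{jk})_{j\neq k}$, $X$ is a Markov jump process with transition intensities $\mu$; in particular, for every $t$, $\mathbb{F}^X_{t+} \perp\!\!\!\perp \mathbb{F}^X_t \mid \sigma(X_t)\vee\mathbb{F}^\mu_\infty$, and there exist conditional transition probabilities $P^\mu_{jk}(t,T)$, depending on $\mu$ only through $(\mu(s))_{t\le s\le T}$, with $\mathbb{P}(X_T=k\mid \mathbb{F}^X_t\vee\mathbb{F}^\mu_\infty)=P^\mu_{X_t k}(t,T)$ for $0\le t<T$ and $\lim_{h\searrow 0}h^{-1}P^\mu_{jk}(t,t+h)=\mu_{jk}(t)$. Then for every $t\in[0,\infty)$, $$\mathbb{F}^{X,\mu}_{t+} \perp\!\!\!\perp \mathbb{F}^X_t \mid \sigma(X_t)\vee\mathbb{F}^\mu_t, \qquad \mathbb{F}^{\mu}_{t+} \perp\!\!\!\perp \mathbb{F}^X_t \mid \mathbb{F}^\mu_t.$$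
   Context: For a process $Z$, $\mathbb{F}^Z_t=\sigma(Z_s: s\le t)$, $\mathbb{F}^Z_\infty=\sigma(\bigcup_{t\ge0}\mathbb{F}^Z_t)$, and $\mathbb{F}^Z_{t+}=\sigma(Z_s: s>t)$ (the future information after time $t$). $\mathbb{F}^{X,\mu}$ denotes the corresponding filtrations generated jointly by $(X,\mu)$. $\mathcal{A}\vee\mathcal{B}$ is the smallest $\sigma$-algebra containing $\mathcal{A}$ and $\mathcal{B}$, and $\perp\!\!\!\perp \cdot\mid\cdot$ denotes conditional independence of $\sigma$-algebras. By the canonical construction, the conditional distribution of $(X_s)_{s\le t}$ given $\mathbb{F}^\mu_\infty$ depends on $\mu$ only through $(\mu(s))_{s\le t}$ (i.e. is $\mathbb{F}^\mu_t$-measurable). All identities hold $\mathbb{P}$-almost surely. *)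

From HB Require Import structures.
From mathcomp Require Import all_boot all_order all_algebra.
From mathcomp Require Import all_classical all_reals all_analysis.
Set Implicit Arguments. Unset Strict Implicit. Unset Printing Implicit Defensive.
Import Order.TTheory GRing.Theory Num.Theory.
Import numFieldNormedType.Exports.
Local Open Scope classical_set_scope.
Local Open Scope ring_scope.

Section CondIndep.
Context {R : realType} {d : measure_display} {Omega : measurableType d}.

Definition cond_prob_version (P : probability Omega R) (G : set (set Omega))
    (A : set Omega) (f : Omega -> R) : Prop :=
  [/\ (forall B : set R, measurable B -> G (f @^-1` B)),
      P.-integrable setT (EFin \o f) &
      (forall g, G g -> (\int[P]_(x in g) (f x)%:E = P (A `&` g))%E)].

Definition cond_indep (P : probability Omega R) (A B G : set (set Omega)) : Prop :=
  forall a b, A a -> B b ->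
  forall fa fb fab : Omega -> R,
    cond_prob_version P G a fa -> cond_prob_version P G b fb ->
    cond_prob_version P G (a `&` b) fab ->
    {ae P, forall w, fab w = fa w * fb w}.

Definition genX {T : Type} (X : R -> Omega -> T) (I : set R) : set (set Omega) :=
  [set A | exists s k, I s /\ A = X s @^-1` [set k]].

Definition genMu (n : nat) (mu : 'I_n -> 'I_n -> R -> Omega -> R) (I : set R)
  : set (set Omega) :=
  [set A | exists s j k (B : set R), [/\ I s, j != k, measurable B &
                                        A = mu j k s @^-1` B]].

Definition FX {T : Type} (X : R -> Omega -> T) (I : set R) := <<s genX X I >>.
Definition Fmu n (mu : 'I_n -> 'I_n -> R -> Omega -> R) (I : set R) :=
  <<s genMu mu I >>.
Definition FXmu {T : Type} n (X : R -> Omega -> T)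
  (mu : 'I_n -> 'I_n -> R -> Omega -> R) (I : set R) :=
  <<s genX X I `|` genMu mu I >>.
Definition sjoin (A B : set (set Omega)) := <<s A `|` B >>.

End CondIndep.

Definition upto {R : realType} (t : R) : set R := [set s | 0 <= s <= t].
Definition after {R : realType} (t : R) : set R := [set s | t < s].
Definition alltimes {R : realType} : set R := [set s | 0 <= s].
Definition between {R : realType} (t T : R) : set R := [set s | t <= s <= T].

(* sample path of a jump process on [0,oo): right-continuous and piecewise
   constant, with left limits (i.e. locally finitely many jumps). *)
Definition jump_path {R : realType} {T : Type} (f : R -> T) : Prop :=
  (forall t, 0 <= t -> exists2 e : R, 0 < e &
      forall s, t <= s < t + e -> f s = f t) /\
  (forall t, 0 < t -> exists2 e : R, 0 < e &
      exists v, forall s, t - e < s < t -> f s = v).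

From HB Require Import structures.
From mathcomp Require Import all_boot all_order all_algebra.
From mathcomp Require Import all_classical all_reals all_analysis.
From mathcomp Require Import measurable_realfun.
Import Order.TTheory GRing.Theory Num.Theory.
Import numFieldNormedType.Exports.
Local Open Scope classical_set_scope.
Local Open Scope ring_scope.
Set Implicit Arguments. Unset Strict Implicit. Unset Printing Implicit Defensive.

(* Conditional independence A _||_ B | G holds iff every version of
   P(b | G), b in B, is also a version of P(b | G v A).
   The canonical construction provides, for u in F^X_t, an F^mu_t-measurable
   version of P(u | F^mu_oo); hence versions of P(u | F^mu_t) are versions of
   P(u | F^mu_oo), i.e. F^mu_oo _||_ F^X_t | F^mu_t, which contains the second
   claim.  Weak union puts sigma(X_t) into the conditioning, and contraction
   with the conditional Markov property F^X_t+ _||_ F^X_t | sigma(X_t) v F^mu_oo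
   yields F^X_t+ v F^mu_oo _||_ F^X_t | sigma(X_t) v F^mu_t, which contains the
   first claim.  Conditional probabilities P(b | G) are Radon-Nikodym
   derivatives of A |-> P(A `&` b) with respect to P restricted to G. *)

Section sigma_join.
Context {d : measure_display} {Omega : measurableType d}.
Implicit Types A B C : set (set Omega).

Lemma sigma_sub A B : A `<=` <<s B >> -> <<s A >> `<=` <<s B >>.
Proof. exact: smallest_sub. Qed.

Lemma sigma_setI A x y : <<s A >> x -> <<s A >> y -> <<s A >> (x `&` y).
Proof. exact: (@measurableI _ (g_sigma_algebraType A)). Qed.

Lemma sigma_setT A : <<s A >> setT.
Proof. exact: (@measurableT _ (g_sigma_algebraType A)). Qed.

Lemma sigma_measurable A : A `<=` measurable -> <<s A >> `<=` measurable.
Proof. by move=> Am; apply: smallest_sub => //; exact: sigma_algebra_measurable. Qed.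

Lemma sigmaU_measurable A B : A `<=` measurable -> B `<=` measurable ->
  <<s A >> `|` <<s B >> `<=` measurable.
Proof. by move=> Am Bm; rewrite subUset; split; exact: sigma_measurable. Qed.

Lemma sub_sjoinl A B : A `<=` sjoin A B.
Proof. by move=> x Ax; apply: sub_sigma_algebra; left. Qed.

Lemma sub_sjoinr A B : B `<=` sjoin A B.
Proof. by move=> x Bx; apply: sub_sigma_algebra; right. Qed.

Lemma sjoin_sub A B C : A `<=` <<s C >> -> B `<=` <<s C >> -> sjoin A B `<=` <<s C >>.
Proof. by move=> AC BC; apply: sigma_sub => x [/AC|/BC]. Qed.

Lemma sjoinC A B : sjoin A B = sjoin B A.
Proof. by rewrite /sjoin setUC. Qed.

Lemma sjoinA A B C : sjoin (sjoin A B) C = sjoin A (sjoin B C).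
Proof.
apply/seteqP; split; apply: sjoin_sub.
- apply: sjoin_sub => [|x Bx]; first exact: sub_sjoinl.
  by apply: sub_sjoinr; exact: sub_sjoinl.
- by move=> x Cx; apply: sub_sjoinr; exact: sub_sjoinr.
- by move=> x Ax; apply: sub_sjoinl; exact: sub_sjoinl.
- apply: sjoin_sub => [x Bx|]; last exact: sub_sjoinr.
  by apply: sub_sjoinl; exact: sub_sjoinr.
Qed.

Lemma sjoin_idl A B : A `<=` <<s B >> -> sjoin A <<s B >> = <<s B >>.
Proof.
move=> AB; apply/seteqP; split; first exact: sjoin_sub.
exact: sub_sjoinr.
Qed.

Lemma sigma_image2_setI A B :
  <<s [set x `&` y | x in <<s A >> & y in <<s B >>] >> = sjoin <<s A >> <<s B >>.
Proof.
apply/seteqP; split; apply: sigma_sub.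
- by move=> _ [x Ax [y By <-]]; apply: sigma_setI; [exact: sub_sjoinl|exact: sub_sjoinr].
- move=> x [Ax|Bx]; apply: sub_sigma_algebra.
  + by exists x => //; exists setT; [exact: sigma_setT|rewrite setIT].
  + by exists setT; [exact: sigma_setT|exists x => //; rewrite setTI].
Qed.

Lemma setI_closed_image2_setI A B :
  setI_closed [set x `&` y | x in <<s A >> & y in <<s B >>].
Proof.
move=> _ _ [x Ax [y By <-]] [x' Ax' [y' By' <-]].
exists (x `&` x'); first exact: sigma_setI.
by exists (y `&` y'); [exact: sigma_setI|rewrite setIACA].
Qed.

End sigma_join.

Section integral_mfrestr.
Context {R : realType} {d : measure_display} {T : measurableType d}.
Variables (mu : {sigma_finite_measure set T -> \bar R}) (a : set T).
Hypotheses (ma : measurable a) (mua : (mu a < +oo)%E).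
Local Notation mua_restr := (mfrestr ma mua).

Let mfrestr_dominates : mua_restr `<< mu.
Proof.
apply/null_content_dominatesP => A mA muA0; apply/eqP.
rewrite eq_le measure_ge0 andbT -muA0 /mfrestr /mrestr.
by apply: le_measure; rewrite ?inE//; exact: measurableI.
Qed.

(* The Radon-Nikodym derivative of [mua_restr] w.r.t. [mu] is a.e. [\1_a]. *)
Lemma ge0_integral_mfrestr (E : set T) (f : T -> \bar R) :
  measurable E -> measurable_fun E f -> (forall x, (0 <= f x)%E) ->
  (\int[mua_restr]_(x in E) f x = \int[mu]_(x in E `&` a) f x)%E.
Proof.
move=> mE mf f0.
rewrite -(Radon_Nikodym_SigmaFinite.change_of_variables mfrestr_dominates f0 mE mf).
rewrite integral_mkcondr; under [RHS]eq_integral do rewrite epatch_indic.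
have iRN := Radon_Nikodym_SigmaFinite.f_integrable mfrestr_dominates.
have mI : measurable_fun setT (fun x => (\1_a x)%:E : \bar R).
  by apply/measurable_EFinP; exact: measurable_indic.
apply: ae_eq_integral => //.
- by apply: emeasurable_funM => //; exact/measurable_funTS/(measurable_int _ iRN).
- by apply: emeasurable_funM => //; exact: measurable_funTS.
apply: ae_eqe_mul2l; apply: (ae_eq_subset (subsetT E)).
apply: integral_ae_eq => // F _ mF.
rewrite -Radon_Nikodym_SigmaFinite.f_integral// integral_indic//.
by rewrite setIC.
Qed.

End integral_mfrestr.

Section generated_sigma_algebra.
Context {R : realType} {d : measure_display} {Omega : measurableType d}.
Variables (P : probability Omega R) (g : set (set Omega)).
Hypothesis gm : g `<=` measurable.
Local Notation OG := (g_sigma_algebraType g).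
Let sigma_gm : <<s g >> `<=` measurable := sigma_measurable gm.

Lemma measurable_coarsen : measurable_fun setT (id : Omega -> OG).
Proof. by move=> _ B mB; rewrite setTI; exact: sigma_gm. Qed.

Lemma measurable_fun_coarse (E : set Omega) d' (T' : measurableType d')
    (f : Omega -> T') :
  <<s g >> E -> measurable_fun (E : set OG) (f : OG -> T') -> measurable_fun E f.
Proof. by move=> mE mf _ B mB; apply: sigma_gm; exact: mf. Qed.

(* The proof arguments of [coarse_prob] and [coarse_trace] are unused; they
   only make the measure instances below inferable. *)
Definition coarse_prob (_ : g `<=` measurable) (A : set OG) : \bar R := P A.
Local Notation PG := (coarse_prob gm).

Let PG0 : PG set0 = 0%E. Proof. exact: measure0. Qed.
Let PG_ge0 A : (0 <= PG A)%E. Proof. exact: measure_ge0. Qed.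
Let PG_sigma_additive : semi_sigma_additive PG.
Proof.
move=> F mF tF mUF; apply: (@measure_semi_sigma_additive _ _ _ P F) => //.
- by move=> n; apply: sigma_gm; exact: mF.
- exact: sigma_gm.
Qed.
HB.instance Definition _ := isMeasure.Build _ OG R PG PG0 PG_ge0 PG_sigma_additive.
Let PGT : PG setT = 1%E. Proof. exact: probability_setT. Qed.
HB.instance Definition _ := Measure_isProbability.Build _ OG R PG PGT.

Lemma ge0_integral_coarse_prob (E : set OG) (f : OG -> \bar R) :
  measurable E -> measurable_fun E f -> (forall x, E x -> (0 <= f x)%E) ->
  (\int[PG]_(x in E) f x = \int[P]_(x in (E : set Omega)) f x)%E.
Proof.
move=> mE mf f0; apply: (ge0_integral_pushforward measurable_coarsen) => //.
by move=> y /set_mem; exact: f0.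
Qed.

Lemma integral_coarse_prob (E : set OG) (f : OG -> \bar R) :
  measurable E -> measurable_fun E f ->
  (\int[PG]_(x in E) f x = \int[P]_(x in (E : set Omega)) f x)%E.
Proof.
move=> mE mf; rewrite integralE [RHS]integralE.
rewrite ge0_integral_coarse_prob//; last exact: measurable_funepos.
by rewrite ge0_integral_coarse_prob//; exact: measurable_funeneg.
Qed.

Variables (a : set Omega) (ma : measurable a).

Definition coarse_trace (_ : g `<=` measurable) (_ : measurable a)
  (A : set OG) : \bar R := P (A `&` a).
Local Notation Pa := (coarse_trace gm ma).

Let Pa0 : Pa set0 = 0%E. Proof. by rewrite /coarse_trace set0I measure0. Qed.
Let Pa_ge0 A : (0 <= Pa A)%E. Proof. exact: measure_ge0. Qed.
Let Pa_sigma_additive : semi_sigma_additive Pa.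
Proof.
move=> F mF tF mUF; rewrite /coarse_trace setI_bigcupl.
apply: (@measure_semi_sigma_additive _ _ _ P (fun n => F n `&` a)) => //.
- by move=> n; apply: measurableI => //; apply: sigma_gm; exact: mF.
- exact: trivIset_setIr.
- by rewrite -setI_bigcupl; apply: measurableI => //; exact: sigma_gm.
Qed.
HB.instance Definition _ := isMeasure.Build _ OG R Pa Pa0 Pa_ge0 Pa_sigma_additive.
Let Pa_fin : fin_num_fun Pa.
Proof.
move=> U mU; rewrite fin_num_measure//.
by apply: measurableI => //; exact: sigma_gm.
Qed.
HB.instance Definition _ := Measure_isFinite.Build _ OG R Pa Pa_fin.

Let Pa_dominates : Pa `<< PG.
Proof.
apply/null_content_dominatesP => A mA PA0; apply/eqP.
rewrite eq_le measure_ge0 andbT -PA0 /coarse_trace /coarse_prob.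
apply: le_measure; rewrite ?inE//; last exact: sigma_gm.
by apply: measurableI => //; exact: sigma_gm.
Qed.

Local Notation RN := (Radon_Nikodym_SigmaFinite.f Pa PG).

Definition cond_prob : Omega -> R := fine \o RN.

Let RNE : RN = EFin \o cond_prob.
Proof.
apply/funext => x /=; rewrite fineK//.
exact: Radon_Nikodym_SigmaFinite.f_fin_num Pa_dominates x.
Qed.

Lemma cond_prob_ge0 x : 0 <= cond_prob x.
Proof. exact: fine_ge0 (Radon_Nikodym_SigmaFinite.f_ge0 Pa_dominates x). Qed.

Let RN_integrable : PG.-integrable setT RN.
Proof. exact: Radon_Nikodym_SigmaFinite.f_integrable Pa_dominates. Qed.

Let measurable_cond_prob : measurable_fun setT (cond_prob : OG -> R).
Proof. by apply/measurable_EFinP; rewrite -RNE; exact: measurable_int RN_integrable. Qed.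

Lemma cond_probP : cond_prob_version P <<s g >> a cond_prob.
Proof.
split.
- by move=> B mB; have := measurable_cond_prob measurableT mB; rewrite setTI.
- have mcp : measurable_fun setT (EFin \o cond_prob : OG -> \bar R).
    exact/measurable_EFinP.
  apply/integrableP; split; first exact: (measurable_fun_coarse (@measurableT _ OG) mcp).
  rewrite -ge0_integral_coarse_prob//; last exact: measurableT_comp.
  by case/integrableP: RN_integrable; rewrite RNE.
- move=> E mE; rewrite setIC.
  have -> : P (E `&` a) = Pa E by [].
  rewrite (Radon_Nikodym_SigmaFinite.f_integral Pa_dominates
    (mE : measurable (E : set OG))) RNE.
  by rewrite integral_coarse_prob//; exact/measurable_funTS/measurable_EFinP.
Qed.

Lemma integral_mul_cond_prob (h : Omega -> R) (E : set Omega) :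
  measurable_fun setT (h : OG -> R) -> (forall x, 0 <= h x) -> <<s g >> E ->
  (\int[P]_(x in E) (h x * cond_prob x)%:E = \int[P]_(x in E `&` a) (h x)%:E)%E.
Proof.
move=> mh h0 mE.
have mhE : measurable_fun (E : set OG) (EFin \o h).
  by apply: measurable_funTS; exact/measurable_EFinP.
have h0E x : (0 <= (EFin \o h) x)%E by rewrite lee_fin.
have Pa_lty : (P a < +oo)%E by rewrite ltey_eq fin_num_measure.
transitivity (\int[PG]_(x in (E : set OG)) ((EFin \o h) x * RN x))%E.
  rewrite integral_coarse_prob//; last first.
    apply: emeasurable_funM => //.
    exact: measurable_funTS (measurable_int _ RN_integrable).
  by apply: eq_integral => x _; rewrite RNE.
rewrite (Radon_Nikodym_SigmaFinite.change_of_variables Pa_dominates h0E mE mhE).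
rewrite (ge0_integral_pushforward measurable_coarsen (mfrestr ma Pa_lty) mE mhE) //.
apply: ge0_integral_mfrestr => //; first exact: sigma_gm.
exact: measurable_fun_coarse mhE.
Qed.

End generated_sigma_algebra.

Section cond_prob_version.
Context {R : realType} {d : measure_display} {Omega : measurableType d}.
Variable P : probability Omega R.
Local Open Scope ereal_scope.

Lemma cond_prob_version_sub (G G' : set (set Omega)) b f : G `<=` G' ->
  cond_prob_version P G' b f ->
  (forall B : set R, measurable B -> G (f @^-1` B)) ->
  cond_prob_version P G b f.
Proof. by move=> GG' [_ fi fE] mf; split => // e /GG'; exact: fE. Qed.

Variables (g : set (set Omega)) (gm : g `<=` measurable).
Local Notation OG := (g_sigma_algebraType g).
Local Notation version := (cond_prob_version P <<s g >>).

Lemma measurable_version_coarse b f : version b f -> measurable_fun setT (f : OG -> R).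
Proof. by case=> mf _ _ _ B mB; rewrite setTI; exact: mf. Qed.

Lemma measurable_version b f : version b f -> measurable_fun setT f.
Proof.
move=> /measurable_version_coarse mf.
exact: (measurable_fun_coarse gm (@measurableT _ OG) mf).
Qed.

Let measurable_EFin_coarse (f : Omega -> R) (E : set Omega) :
  measurable_fun setT (f : OG -> R) -> <<s g >> E -> measurable_fun E (EFin \o f).
Proof.
move=> mf mE; apply: (measurable_fun_coarse gm mE).
by apply: measurable_funTS; exact/measurable_EFinP.
Qed.

Lemma integral_ae_eq_sigma (f h : Omega -> R) :
  measurable_fun setT (f : OG -> R) -> measurable_fun setT (h : OG -> R) ->
  P.-integrable setT (EFin \o f) ->
  (forall e, <<s g >> e ->
     \int[P]_(x in e) (f x)%:E = \int[P]_(x in e) (h x)%:E) ->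
  {ae P, forall w, f w = h w}.
Proof.
move=> mf mh fi fh.
have mf' : measurable_fun (setT : set OG) (EFin \o f) by exact/measurable_EFinP.
have mh' : measurable_fun (setT : set OG) (EFin \o h) by exact/measurable_EFinP.
have iG : (coarse_prob P gm).-integrable setT (EFin \o f).
  apply/integrableP; split => //.
  rewrite ge0_integral_coarse_prob//; last exact: measurableT_comp.
  by case/integrableP: fi.
have [N [mN PN0 fhN]] : ae_eq (coarse_prob P gm) setT (EFin \o f) (EFin \o h).
  apply: integral_ae_eq => // E _ mE.
  by rewrite !integral_coarse_prob//; [exact: fh|exact: measurable_funTS..].
exists N; split; [exact: sigma_measurable gm _ mN|exact: PN0|].
by move=> w /= nfh; apply: fhN => /= /(_ I) [] /nfh.
Qed.

Lemma version_ae_unique b f h : version b f -> version b h ->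
  {ae P, forall w, f w = h w}.
Proof.
move=> vf vh; apply: integral_ae_eq_sigma.
- exact: measurable_version_coarse vf.
- exact: measurable_version_coarse vh.
- by case: vf.
- by move=> e ge; case: vf => _ _ ->//; case: vh => _ _ ->.
Qed.

Lemma version_ae_eq b f (h : Omega -> R) : version b f ->
  (forall B : set R, measurable B -> <<s g >> (h @^-1` B)) ->
  {ae P, forall w, f w = h w} -> version b h.
Proof.
move=> vf hG fh.
have mhG : measurable_fun setT (h : OG -> R).
  by move=> _ B mB; rewrite setTI; exact: hG.
have mh := measurable_fun_coarse gm (@measurableT _ OG) mhG.
have fhE E : measurable E -> ae_eq P E (EFin \o f) (EFin \o h).
  by move=> _; apply: filterS fh => w /= -> _.
have mfG := measurable_version_coarse vf; have mf := measurable_version vf.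
split => //.
- apply/integrableP; split; first exact/measurable_EFinP.
  have -> : \int[P]_x `|(EFin \o h) x| = \int[P]_x `|(EFin \o f) x|.
    apply: ae_eq_integral => //; try exact/measurableT_comp/measurable_EFinP.
    by apply: filterS fh => w /= -> _.
  by case: vf => _ /integrableP[].
- move=> e ge; case: vf => _ _ <-//; apply: ae_eq_integral.
  + exact: sigma_measurable gm _ ge.
  + exact: measurable_EFin_coarse mhG ge.
  + exact: measurable_EFin_coarse mfG ge.
  + exact/ae_eq_sym/fhE/(sigma_measurable gm).
Qed.

Lemma integral_versionM a b f1 f2 : measurable a -> measurable b ->
  version a f1 -> version b f2 -> forall e, <<s g >> e ->
  \int[P]_(x in e) (f1 x * f2 x)%:E = \int[P]_(x in a `&` e) (f2 x)%:E.
Proof.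
move=> ma mb v1 v2 e ge.
have e1 := version_ae_unique v1 (cond_probP P gm ma).
have e2 := version_ae_unique v2 (cond_probP P gm mb).
have mfa := measurable_version_coarse (cond_probP P gm ma).
have mfb := measurable_version_coarse (cond_probP P gm mb).
have mf1 := measurable_version_coarse v1; have mf2 := measurable_version_coarse v2.
have me := sigma_measurable gm ge.
transitivity (\int[P]_(x in e) (cond_prob P gm mb x * cond_prob P gm ma x)%:E).
  apply: ae_eq_integral => //.
  - exact: measurable_EFin_coarse (measurable_funM mf1 mf2) ge.
  - exact: measurable_EFin_coarse (measurable_funM mfb mfa) ge.
  - by apply: filterS2 e1 e2 => w /= -> -> _; rewrite mulrC.
rewrite (integral_mul_cond_prob P gm ma mfb (cond_prob_ge0 P gm mb) ge) setIC.
apply: ae_eq_integral => //.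
- exact: measurableI.
- exact: measurable_funS me (@subIsetr _ a e) (measurable_EFin_coarse mfb ge).
- exact: measurable_funS me (@subIsetr _ a e) (measurable_EFin_coarse mf2 ge).
- by apply: filterS e2 => w /= -> _.
Qed.

End cond_prob_version.

Section version_sjoin.
Context {R : realType} {d : measure_display} {Omega : measurableType d}.
Variables (P : probability Omega R) (g a : set (set Omega)).
Hypotheses (gm : g `<=` measurable) (am : a `<=` measurable).
Variables (b : set Omega) (mb : measurable b).
Local Open Scope ereal_scope.

Let h := cond_prob P gm mb.
Let Ph (E : set Omega) := \int[P]_(x in E) (h x)%:E.

Let Ph0 : Ph set0 = 0. Proof. exact: integral_set0. Qed.
Let Ph_ge0 E : 0 <= Ph E.
Proof. by apply: integral_ge0 => x _; rewrite lee_fin cond_prob_ge0. Qed.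
Let Ph_sigma_additive : semi_sigma_additive Ph.
Proof.
apply: semi_sigma_additive_nng_induced; last by move=> x; rewrite lee_fin cond_prob_ge0.
exact/measurable_EFinP/(measurable_version gm (cond_probP P gm mb)).
Qed.
HB.instance Definition _ := isMeasure.Build _ _ _ Ph Ph0 Ph_ge0 Ph_sigma_additive.

Lemma version_sjoin f : cond_prob_version P <<s g >> b f ->
  (forall x y, <<s g >> x -> <<s a >> y ->
     \int[P]_(w in x `&` y) (f w)%:E = P (b `&` (x `&` y))) ->
  cond_prob_version P (sjoin <<s g >> <<s a >>) b f.
Proof.
move=> vf fxy.
pose pi := [set x `&` y | x in <<s g >> & y in <<s a >>].
have sjm : sjoin <<s g >> <<s a >> `<=` measurable.
  exact/sigma_measurable/sigmaU_measurable.
have pim : pi `<=` measurable.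
  by move=> p pip; apply: sjm; rewrite -sigma_image2_setI; exact: sub_sigma_algebra.
have fh := version_ae_unique gm vf (cond_probP P gm mb).
have int_fh E : measurable E -> \int[P]_(w in E) (f w)%:E = Ph E.
  move=> mE; apply: ae_eq_integral => //.
  - exact/measurable_funTS/measurable_EFinP/(measurable_version gm vf).
  - exact/measurable_funTS/measurable_EFinP/(measurable_version gm (cond_probP P gm mb)).
  - by apply: filterS fh => w /= -> _.
case: (vf) => fG fi _; split => // [B mB|e].
  by apply: sub_sjoinl; exact: fG.
rewrite -sigma_image2_setI => pie; rewrite int_fh; last first.
  by apply: sjm; rewrite -sigma_image2_setI.
(* Both sides are finite measures in [e] that agree on the pi-system [pi]. *)
rewrite setIC; apply: (g_sigma_algebra_measure_unique pi pim (fun=> setT)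
  _ _ Ph (mrestr P mb)) => //.
- by exists setT; [exact: sigma_setT|exists setT; [exact: sigma_setT|rewrite setIT]].
- exact: bigcup_const.
- exact: setI_closed_image2_setI.
- move=> _ [x gx [y ay <-]]; rewrite /mrestr /= [X in _ = P X]setIC -fxy// int_fh//.
  by apply: pim; exists x => //; exists y.
- by move=> _; apply: integrable_lty => //; case: (cond_probP P gm mb).
Qed.

End version_sjoin.

Section cond_indep.
Context {R : realType} {d : measure_display} {Omega : measurableType d}.
Variable P : probability Omega R.
Local Open Scope ereal_scope.

Definition cond_prob_extends (G G' B : set (set Omega)) :=
  forall b f, B b -> cond_prob_version P G b f -> cond_prob_version P G' b f.

Lemma cond_indepC A B G : cond_indep P A B G -> cond_indep P B A G.
Proof.
move=> AB b a Bb Aa fb fa fba vb va; rewrite setIC => vab.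
by apply: filterS (AB a b Aa Bb fa fb fba va vb vab) => w ->; rewrite mulrC.
Qed.

Lemma cond_indepSl A A' B G : A' `<=` A -> cond_indep P A B G -> cond_indep P A' B G.
Proof. by move=> A'A AB a b /A'A; exact: AB. Qed.

Lemma version_lift g g' (gm : g `<=` measurable) (gm' : g' `<=` measurable) b f h :
  <<s g >> `<=` <<s g' >> ->
  cond_prob_version P <<s g >> b f -> cond_prob_version P <<s g' >> b f ->
  cond_prob_version P <<s g >> b h -> cond_prob_version P <<s g' >> b h.
Proof.
move=> gg' vf vf' vh; apply: (version_ae_eq gm' vf').
  by move=> B mB; apply: gg'; case: vh => + _ _; exact.
exact: (version_ae_unique gm vf vh).
Qed.

Lemma cond_prob_extends_of_versions n m (nm : n `<=` measurable)
    (mm : m `<=` measurable) B :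
  <<s n >> `<=` <<s m >> ->
  (forall b, B b -> exists f, cond_prob_version P <<s m >> b f /\
     forall C : set R, measurable C -> <<s n >> (f @^-1` C)) ->
  cond_prob_extends <<s n >> <<s m >> B.
Proof.
move=> nm_sub hB b h Bb vh; have [f [vf fn]] := hB b Bb.
exact: (version_lift nm mm nm_sub (cond_prob_version_sub nm_sub vf fn) vf vh).
Qed.

Lemma cond_indepP a g B (am : a `<=` measurable) (gm : g `<=` measurable) :
  B `<=` measurable ->
  cond_indep P <<s a >> B <<s g >> <->
  cond_prob_extends <<s g >> (sjoin <<s g >> <<s a >>) B.
Proof.
move=> Bm; split=> [ind b f Bb vf|ext a' b aa Bb fa fb fab va vb vab].
  have mb := Bm b Bb.
  apply: (version_sjoin gm am mb vf) => x y gx ay.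
  have my := sigma_measurable am ay.
  have vy := cond_probP P gm my; have vyb := cond_probP P gm (measurableI _ _ my mb).
  rewrite setIC -(integral_versionM gm my mb vy vf gx).
  transitivity (\int[P]_(w in x) (cond_prob P gm (measurableI _ _ my mb) w)%:E).
    have mx := sigma_measurable gm gx.
    apply: ae_eq_integral => //.
    - apply: measurable_funTS; apply/measurable_EFinP.
      apply: measurable_funM; first exact: (measurable_version gm vy).
      exact: (measurable_version gm vf).
    - exact/measurable_funTS/measurable_EFinP/(measurable_version gm vyb).
    - by apply: filterS (ind y b ay Bb _ _ _ vy vf vyb) => w -> _.
  by case: vyb => _ _ ->//; rewrite setICA setIA.
have mA := sigma_measurable am aa; have mb := Bm b Bb.
apply: (integral_ae_eq_sigma gm).
- exact: measurable_version_coarse vab.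
- apply: measurable_funM; [exact: measurable_version_coarse va|].
  exact: measurable_version_coarse vb.
- by case: vab.
move=> e ge; rewrite (integral_versionM gm mA mb va vb ge).
case: vab => _ _ ->//; case: (ext b fb Bb vb) => _ _ ->.
  by rewrite setICA setIA.
by apply: sigma_setI; [exact: sub_sjoinr; exact: sub_sigma_algebra|exact: sub_sjoinl].
Qed.

Lemma cond_indep_weak_union m u g x (mm : m `<=` measurable)
    (um : u `<=` measurable) (gm : g `<=` measurable) (xm : x `<=` measurable) :
  <<s x >> `<=` <<s u >> ->
  cond_indep P <<s m >> <<s u >> <<s g >> ->
  cond_indep P <<s m >> <<s u >> (sjoin <<s x >> <<s g >>).
Proof.
move=> xu /cond_indepC /(cond_indepP um gm (sigma_measurable mm)) ext.
apply/cond_indepC/(cond_indepP um (sigmaU_measurable xm gm)).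
  exact: sigma_measurable.
rewrite -/(sjoin <<s x >> <<s g >>) (sjoinC <<s x >>) sjoinA (sjoin_idl xu).
move=> b f mb vf.
have mb' := sigma_measurable mm mb.
have vh := ext b _ mb (cond_probP P gm mb').
have sub_join : sjoin <<s g >> <<s x >> `<=` sjoin <<s g >> <<s u >>.
  apply: sjoin_sub; first exact: sub_sjoinl.
  by move=> y /xu; exact: sub_sjoinr.
apply: (version_lift (sigmaU_measurable gm xm) (sigmaU_measurable gm um) sub_join
  _ vh vf).
apply: (cond_prob_version_sub sub_join vh).
by case: (cond_probP P gm mb') => + _ _ B mB; move/(_ B mB)/sub_sjoinl.
Qed.

Lemma cond_indep_contraction a m g B (am : a `<=` measurable)
    (mm : m `<=` measurable) (gm : g `<=` measurable) :
  B `<=` measurable ->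
  cond_indep P <<s m >> B <<s g >> ->
  cond_indep P <<s a >> B (sjoin <<s g >> <<s m >>) ->
  cond_indep P (sjoin <<s m >> <<s a >>) B <<s g >>.
Proof.
move=> Bm /(cond_indepP mm gm Bm) ext_m /(cond_indepP am (sigmaU_measurable gm mm) Bm).
move=> ext_a; apply/(cond_indepP (sigmaU_measurable mm am) gm Bm).
rewrite -/(sjoin <<s m >> <<s a >>) -sjoinA => b f Bb vf.
exact/ext_a/ext_m.
Qed.

End cond_indep.

Section generators.
Context {R : realType} {d : measure_display} {Omega : measurableType d}.

Lemma genX_measurable T (X : R -> Omega -> T) (I : set R) :
  (forall t k, 0 <= t -> measurable (X t @^-1` [set k])) ->
  I `<=` alltimes -> genX X I `<=` measurable.
Proof. by move=> mX I0 _ [s [k [Is ->]]]; exact/mX/I0. Qed.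

Lemma genXS T (X : R -> Omega -> T) (I J : set R) : I `<=` J -> genX X I `<=` genX X J.
Proof. by move=> IJ _ [s [k [Is ->]]]; exists s, k; split => //; exact: IJ. Qed.

Lemma genMu_measurable n (mu : 'I_n -> 'I_n -> R -> Omega -> R) (I : set R) :
  (forall j k t, j != k -> 0 <= t -> measurable_fun setT (mu j k t)) ->
  I `<=` alltimes -> genMu mu I `<=` measurable.
Proof.
move=> mmu I0 _ [s [j [k [B [Is jk mB ->]]]]].
by rewrite -(setTI (_ @^-1` _)); exact: mmu jk (I0 s Is) measurableT B mB.
Qed.

Lemma genMuS n (mu : 'I_n -> 'I_n -> R -> Omega -> R) (I J : set R) :
  I `<=` J -> genMu mu I `<=` genMu mu J.
Proof.
by move=> IJ _ [s [j [k [B [Is jk mB ->]]]]]; exists s, j, k, B; split => //; exact: IJ.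
Qed.

Lemma FXmu_sub_sjoin T (X : R -> Omega -> T) n (mu : 'I_n -> 'I_n -> R -> Omega -> R)
    (I J : set R) :
  I `<=` J -> FXmu X mu I `<=` sjoin (Fmu mu J) (FX X I).
Proof.
move=> IJ; apply: sigma_sub => s [gX|gmu].
  by apply: sub_sjoinr; exact: sub_sigma_algebra.
by apply: sub_sjoinl; apply: sub_sigma_algebra; exact: genMuS IJ _ gmu.
Qed.

End generators.

Theorem lemma1 (R : realType) (d : measure_display) (Omega : measurableType d)
  (P : probability Omega R) (J : nat)
  (mu : 'I_J.+1 -> 'I_J.+1 -> R -> Omega -> R)
  (X : R -> Omega -> 'I_J.+1) (x0 : 'I_J.+1)
  (Pmu : 'I_J.+1 -> 'I_J.+1 -> R -> R -> Omega -> R) :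
  (* intensities: measurable, [0,oo)-valued, continuous paths, finite mean *)
  (forall j k t, j != k -> 0 <= t -> measurable_fun setT (mu j k t)) ->
  (forall j k t w, j != k -> 0 <= t -> 0 <= mu j k t w) ->
  (forall j k w, j != k ->
     {within `[0, +oo[, continuous (fun t => mu j k t w)}) ->
  (forall j k t, j != k -> 0 <= t ->
     (\int[P]_w (mu j k t w)%:E < +oo)%E) ->
  (* X: jump process with values in S = {0,...,J}, X_0 = x0 *)
  (forall t k, 0 <= t -> measurable (X t @^-1` [set k])) ->
  (forall w, X 0 w = x0) ->
  (forall w, jump_path (fun t => X t w)) ->
  (* conditional Markov property given F^mu_oo *)
  (forall t, 0 <= t ->
     cond_indep P (FX X (after t)) (FX X (upto t))
       (sjoin (FX X [set t]) (Fmu mu alltimes))) ->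
  (* conditional transition probabilities P^mu_jk(t,T) *)
  (forall j k t T, 0 <= t < T ->
     forall B : set R, measurable B ->
       Fmu mu (between t T) (Pmu j k t T @^-1` B)) ->
  (forall k t T, 0 <= t < T ->
     cond_prob_version P (sjoin (FX X (upto t)) (Fmu mu alltimes))
       (X T @^-1` [set k]) (fun w => Pmu (X t w) k t T w)) ->
  (forall j k t, j != k -> 0 <= t ->
     {ae P, forall w,
       (fun h => Pmu j k t (t + h) w / h) @ 0^'+ --> mu j k t w}) ->
  (* canonical construction: the conditional law of (X_s)_{s<=t} given
     F^mu_oo is F^mu_t-measurable *)
  (forall t, 0 <= t -> forall A, FX X (upto t) A ->
     exists f, cond_prob_version P (Fmu mu alltimes) A f /\
       (forall B : set R, measurable B -> Fmu mu (upto t) (f @^-1` B))) ->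
  forall t : R, 0 <= t ->
    cond_indep P (FXmu X mu (after t)) (FX X (upto t))
      (sjoin (FX X [set t]) (Fmu mu (upto t))) /\
    cond_indep P (Fmu mu (after t)) (FX X (upto t)) (Fmu mu (upto t)).
Proof.
move=> mmu _ _ _ mX _ _ markov _ _ _ canon t t0.
have uptoT : upto t `<=` alltimes by move=> s /andP[].
have afterT : after t `<=` alltimes by move=> s ts; exact/ltW/(le_lt_trans t0 ts).
have tT : [set t] `<=` alltimes by move=> s ->.
have t_upto : [set t] `<=` upto t by move=> s ->; rewrite /upto/= t0 lexx.
have Um := genX_measurable mX uptoT; have Xtm := genX_measurable mX tT.
have Am := genX_measurable mX afterT; have Nm := genMu_measurable mmu uptoT.
have Mm := genMu_measurable mmu (@subset_refl _ alltimes).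
have NM : Fmu mu (upto t) `<=` Fmu mu alltimes := sub_sigma_algebra2 (genMuS uptoT).
have ind_M : cond_indep P (Fmu mu alltimes) (FX X (upto t)) (Fmu mu (upto t)).
  rewrite /Fmu /FX.
  apply/(cond_indepP P Mm Nm (sigma_measurable Um)).
  rewrite sjoin_idl//; exact: (cond_prob_extends_of_versions Nm Mm NM (canon t t0)).
split; last exact: cond_indepSl (sub_sigma_algebra2 (genMuS afterT)) ind_M.
have ind_XN :=
  cond_indep_weak_union Mm Um Nm Xtm (sub_sigma_algebra2 (genXS t_upto)) ind_M.
have markov_XN : cond_indep P (FX X (after t)) (FX X (upto t))
    (sjoin (sjoin (FX X [set t]) (Fmu mu (upto t))) (Fmu mu alltimes)).
  by rewrite sjoinA (sjoin_idl NM); exact: markov.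
have := cond_indep_contraction Am Mm (sigmaU_measurable Xtm Nm) (sigma_measurable Um)
  ind_XN markov_XN.
by apply: cond_indepSl; exact: FXmu_sub_sjoin.
Qed.
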